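(* Let $k$ be a field, $Q=k[[y_1,\dots,y_{d+1}]]$ with maximal ideal $\mathfrak{n}$, and let $M$ be a $Q$-module with a minimal presentation $0\to Q^n\xrightarrow{\phi}Q^n\to M\to0$. Write $\phi=\sum_{i\ge i(M)}\phi_i$, where $\phi_i$ is the $n\times n$ matrix of the degree-$i$ homogeneous components of the entries of $\phi$. Then $\det\phi_{i(M)}\neq0$ if and only if $h_M(z)=\mu(M)(1+z+\cdots+z^{i(M)-1})$.
   Context: $i(M)=\max\{i:\text{all entries of }\phi\text{ lie in }\mathfrak{n}^i\}$. The Hilbert series $\sum_n\lambda(\mathfrak{n}^nM/\mathfrak{n}^{n+1}M)z^n=h_M(z)/(1-z)^{\dim M}$ with $h_M\in\mathbb{Z}[z]$. $\mu(M)$ is the minimal number of generators. *)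

From HB Require Import structures.
From mathcomp Require Import all_boot all_order all_algebra.
From mathcomp Require Import mpoly.
Set Implicit Arguments. Unset Strict Implicit. Unset Printing Implicit Defensive.
Import Order.TTheory GRing.Theory Num.Theory.
Local Open Scope ring_scope.

(* Formal power series ring Q = k[[y_1, ..., y_{d+1}]], encoded by the       *)
(* sequence of homogeneous components: a power series f is a function        *)
(* f : nat -> {mpoly k[d.+1]} with f a homogeneous of degree a, standing for  *)
(* f = \sum_a f a.                                                          *)

Section PS.
Variables (k : fieldType) (d : nat).

Definition mp := {mpoly k[d.+1]}.
Definition ps := nat -> mp.

Definition homog_of (a : nat) (p : mp) : Prop :=
  forall m : 'X_{1..d.+1}, mdeg m != a -> p@_m = 0.

Definition is_ps (f : ps) : Prop := forall a, homog_of a (f a).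

Definition ps_eq (f g : ps) : Prop := forall a, f a = g a.

Definition ps_add (f g : ps) : ps := fun a => f a + g a.
Definition ps_mul (f g : ps) : ps :=
  fun a => \sum_(b < a.+1) f b * g (a - b)%N.
Definition ps_scale (c : k) (f : ps) : ps := fun a => c *: f a.

(* f \in n^j where n = (y_1, ..., y_{d+1}) is the maximal ideal of Q *)
Definition in_maxpow (j : nat) (f : ps) : Prop := forall a, (a < j)%N -> f a = 0.

Definition psvec (n : nat) := 'I_n -> ps.
Definition psmat (n : nat) := 'I_n -> 'I_n -> ps.

Definition is_psvec n (v : psvec n) : Prop := forall c, is_ps (v c).
Definition is_psmat n (phi : psmat n) : Prop := forall r c, is_ps (phi r c).

Definition mat_apply n (phi : psmat n) (x : psvec n) : psvec n :=
  fun r a => \sum_(c < n) ps_mul (phi r c) (x c) a.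

Definition ps_injective n (phi : psmat n) : Prop :=
  forall x : psvec n, is_psvec x ->
    (forall r, ps_eq (mat_apply phi x r) (fun _ => 0)) ->
    forall c, ps_eq (x c) (fun _ => 0).

(* the presentation is minimal: all entries of phi lie in n *)
Definition minimal_pres n (phi : psmat n) : Prop :=
  forall r c, in_maxpow 1 (phi r c).

Definition hcomp n (phi : psmat n) (i : nat) : 'M[mp]_n :=
  \matrix_(r, c) phi r c i.

Definition all_in_maxpow n (phi : psmat n) (i : nat) : Prop :=
  forall r c, in_maxpow i (phi r c).
Definition is_iM n (phi : psmat n) (i : nat) : Prop :=
  all_in_maxpow phi i /\ forall j, all_in_maxpow phi j -> (j <= i)%N.

(* mu(M): minimal number of generators of M.  v_1..v_m in Q^n generate M iff *)
(* every w in Q^n is  \sum_l a_l v_l + phi x  for some a_l in Q, x in Q^n.   *)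
Definition generates n (phi : psmat n) m (v : 'I_m -> psvec n) : Prop :=
  forall w : psvec n, is_psvec w ->
    exists (coef : 'I_m -> ps) (x : psvec n),
      (forall l, is_ps (coef l)) /\ is_psvec x /\
      forall c a, w c a = \sum_(l < m) ps_mul (coef l) (v l c) a
                          + mat_apply phi x c a.
Definition is_mu n (phi : psmat n) (mu : nat) : Prop :=
  (exists v : 'I_mu -> psvec n, (forall l, is_psvec (v l)) /\ generates phi v) /\
  forall m (v : 'I_m -> psvec n), (forall l, is_psvec (v l)) -> generates phi v ->
    (mu <= m)%N.

(* lambda(n^j M / n^(j+1) M).  This module is killed by n, so its length is  *)
(* its dimension over k = Q/n, i.e. the maximal size of a family of elements *)
(* w_1..w_m of n^j Q^n whose classes are k-linearly independent modulo      *)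
(* n^(j+1) Q^n + phi(Q^n).                                                   *)
Definition indep_mod n (phi : psmat n) (j : nat) m (w : 'I_m -> psvec n) : Prop :=
  forall (cf : 'I_m -> k) (x : psvec n), is_psvec x ->
    (forall c a, (a <= j)%N ->
        \sum_(l < m) cf l *: w l c a = mat_apply phi x c a) ->
    forall l, cf l = 0.
Definition good_family n (j : nat) m (w : 'I_m -> psvec n) : Prop :=
  forall l, is_psvec (w l) /\ forall c, in_maxpow j (w l c).
Definition is_graded_length n (phi : psmat n) (j len : nat) : Prop :=
  (exists w : 'I_len -> psvec n, good_family j w /\ indep_mod phi j w) /\
  forall m (w : 'I_m -> psvec n), good_family j w -> indep_mod phi j w ->
    (m <= len)%N.

Definition is_hilbert_series n (phi : psmat n) (H : nat -> nat) : Prop :=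
  forall j, is_graded_length phi j (H j).

End PS.

Definition polyser_eq (p : {poly int}) (H : nat -> nat) (h : {poly int}) : Prop :=
  forall j, \sum_(t < j.+1) p`_t * (H (j - t)%N)%:Z = h`_j.

(* h is the numerator h_M of the Hilbert series H: H = h/(1-z)^e with        *)
(* h(1) != 0 (the exponent e is then the pole order at z = 1, i.e. dim M).   *)
Definition is_hnum (H : nat -> nat) (h : {poly int}) : Prop :=
  exists e : nat, polyser_eq ((1 - 'X) ^+ e) H h /\ h.[1] != 0.

(* Let i = i(M) and let phi_i be the initial matrix of phi.  The module
   n^j M / n^(j+1) M is n^j Q^n / n^(j+1) Q^n modulo the degree-j initial forms
   of phi(Q^n) ∩ n^j Q^n.  If phi_i kills no nonzero homogeneous vector of
   degree < t, the initial forms of degree t + i are exactly the images under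
   phi_i of the vectors of forms of degree t.  Hence, up to degree t + i, the
   Hilbert function of M is that of (Q/(f))^n for f of order i, whose series is
   n (1 + z + ... + z^(i-1)) / (1 - z)^d, except that it is strictly larger in
   degree t + i if phi_i kills a nonzero vector of forms of degree t.
   If det phi_i <> 0 there is no such vector, and mu(M) = n by Nakayama.  If
   det phi_i = 0, pick such a vector of least degree t.  Were h_M of the stated
   form with denominator (1 - z)^e, the coefficients of z would give e = d, and
   then the two Hilbert functions would also agree in degree t + i.  When
   t + i = 1 the contradiction is instead n d < lambda(n M / n^2 M) < n (d + 1),
   the middle term being a multiple of n. *)

From HB Require Import structures.
From mathcomp Require Import all_boot all_order all_algebra.
From mathcomp Require Import mpoly zify.
Import Order.TTheory GRing.Theory Num.Theory.
Local Open Scope ring_scope.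
Set Implicit Arguments. Unset Strict Implicit. Unset Printing Implicit Defensive.

Section FreeModulo.
Variables (K : fieldType) (V : vectType K) (U : {vspace V}).

Definition free_mod m (w : 'I_m -> V) :=
  forall cf : 'I_m -> K, \sum_l cf l *: w l \in U -> forall l, cf l = 0.

Lemma free_mod_size m (w : 'I_m -> V) : free_mod w -> (m <= \dim {:V} - \dim U)%N.
Proof.
move=> freew; pose X := [tuple w l | l < m].
have sumX (cf : 'I_m -> K) : \sum_(l < m) cf l *: X`_l = \sum_l cf l *: w l.
  by apply: eq_bigr => l _; rewrite -tnth_nth tnth_mktuple.
have freeX : free X.
  by apply/freeP => cf; rewrite sumX => sum0; apply: freew; rewrite sum0 mem0v.
have capXU : (<<X>> :&: U = 0)%VS.
  apply/eqP; rewrite -subv0; apply/subvP => v /memv_capP [/coord_span-> vU].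
  rewrite memv0 sumX; apply/eqP/big1 => l _.
  by rewrite (freew (fun l => coord X l v)) ?scale0r // -sumX.
have := dimvS (subvf (<<X>> + U)%VS).
by rewrite dimv_disjoint_sum // (eqnP freeX) size_tuple; lia.
Qed.

Lemma free_mod_compl : free_mod (tnth (vbasis U^C)%VS).
Proof.
move=> cf sumU; have /freeP := basis_free (vbasisP U^C%VS); apply.
rewrite (eq_bigr (fun l => cf l *: tnth (vbasis U^C%VS) l)); last first.
  by move=> l _; rewrite (tnth_nth 0).
have sumC : \sum_l cf l *: tnth (vbasis U^C%VS) l \in U^C%VS.
  by apply: memv_suml => l _; apply/memvZ/vbasis_mem/mem_tnth.
by apply/eqP; rewrite -memv0 -(capv_compl U) memv_cap sumU sumC.
Qed.

End FreeModulo.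

Section SeriesConvolution.
Implicit Types (p q : {poly int}) (f g : nat -> int).

(* [polyser_eq p H h] unfolds to [forall j, conv p (fun a => (H a)%:Z) j = h`_j]. *)
Definition conv p f j : int := \sum_(t < j.+1) p`_t * f (j - t)%N.

Lemma conv_coefM p f j a : (a <= j)%N -> conv p f a = (p * \poly_(t < j.+1) f t)`_a.
Proof.
move=> le_aj; rewrite /conv coefM; apply: eq_bigr => t _.
by rewrite coef_poly ltnS (leq_trans (leq_subr _ _) le_aj).
Qed.

Lemma eq_conv p f g : f =1 g -> conv p f =1 conv p g.
Proof. by move=> eq_fg j; apply: eq_bigr => t _; rewrite eq_fg. Qed.

Lemma conv_mul p q f j : conv (p * q) f j = conv p (conv q f) j.
Proof.
rewrite (conv_coefM _ _ (leqnn j)) -mulrA coefM; apply: eq_bigr => t _.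
by rewrite -(conv_coefM q f (leq_subr t j)).
Qed.

Lemma convB p f g j : conv p (fun a => f a - g a) j = conv p f j - conv p g j.
Proof. by rewrite /conv -sumrB; apply: eq_bigr => t _; rewrite mulrBr. Qed.

Lemma convZ p c f j : conv p (fun a => c * f a) j = c * conv p f j.
Proof. by rewrite mulr_sumr; apply: eq_bigr => t _; rewrite mulrCA. Qed.

Lemma conv_Xn i f j : conv 'X^i f j = if (i <= j)%N then f (j - i)%N else 0.
Proof.
rewrite (conv_coefM _ _ (leqnn j)) coefXnM.
by case: ltnP => // _; rewrite coef_poly ltnS leq_subr.
Qed.

Lemma conv1 f j : conv 1 f j = f j.
Proof. by rewrite -(expr0 'X) conv_Xn subn0. Qed.

Lemma conv_1subX f j : conv (1 - 'X) f j = f j - (if j is j'.+1 then f j' else 0).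
Proof.
rewrite /conv big_ord_recl coefB coef1 coefX subn0 subr0 mul1r.
case: j => [|j]; first by rewrite big_ord0 subr0.
rewrite big_ord_recl big1 /= ?addr0 => [|t _]; last by rewrite coefB coef1 coefX mul0r.
by rewrite coefB coef1 coefX sub0r mulN1r subSS subn0.
Qed.

Lemma conv_binomial d j : conv ((1 - 'X) ^+ d) (fun a => 'C(a + d, a)%:Z) j = 1.
Proof.
elim: d j => [|d IHd] j; first by rewrite expr0 conv1 addn0 binn.
rewrite exprSr conv_mul -(IHd j); apply: eq_conv => -[|a]; rewrite conv_1subX.
  by rewrite !bin0 subr0.
by rewrite addSn addnS binS PoszD addrK.
Qed.

Lemma conv_vanish_below p f j :
  (forall a, (a < j)%N -> f a = 0) -> conv p f j = p`_0 * f j.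
Proof.
move=> f0; rewrite /conv big_ord_recl subn0 big1 ?addr0 // => t _.
by rewrite f0 ?mulr0 // lift0 ltn_subrL; case: j t f0 => [[]|].
Qed.

Lemma conv_cancel p f g j : p`_0 = 1 ->
  (forall a, (a < j)%N -> f a = g a) -> conv p f j = conv p g j -> f j = g j.
Proof.
move=> p01 eq_fg /eqP; rewrite -subr_eq0 -convB conv_vanish_below => [|a /eq_fg->].
  by rewrite p01 mul1r subr_eq0 => /eqP.
by rewrite subrr.
Qed.

End SeriesConvolution.

(* The Hilbert function of (Q/(f))^n for f of order i. *)
Definition hypersurface_hilbert (n i d j : nat) : int :=
  n%:Z * ('C(j + d, j)%:Z - if (i <= j)%N then 'C(j - i + d, j - i)%:Z else 0).

Lemma conv_hypersurface_hilbert n i d j :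
  conv ((1 - 'X) ^+ d) (hypersurface_hilbert n i d) j = if (j < i)%N then n%:Z else 0.
Proof.
rewrite convZ convB conv_binomial.
rewrite (eq_conv _ (g := conv 'X^i (fun a => 'C(a + d, a)%:Z))); last by move=> a; rewrite conv_Xn.
rewrite -conv_mul [_ * 'X^i]mulrC conv_mul conv_Xn.
by case: ltnP => _; rewrite ?conv_binomial ?subrr ?mulr0 // subr0 mulr1.
Qed.

Lemma geom_poly i : \sum_(t < i) 'X^t = \poly_(t < i) (1 : int).
Proof. by rewrite poly_def; apply: eq_bigr => t _; rewrite scale1r. Qed.

Lemma coef_geom (mu i j : nat) :
  ((mu%:R : int) *: \sum_(t < i) 'X^t)`_j = if (j < i)%N then mu%:Z else 0.
Proof. by rewrite geom_poly coefZ coef_poly; case: ifP; rewrite ?mulr1 ?mulr0 // natz. Qed.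

Lemma horner_geom (mu i : nat) : ((mu%:R : int) *: \sum_(t < i) 'X^t).[1] = (mu * i)%:R.
Proof.
rewrite hornerZ horner_sum (eq_bigr (fun _ => 1)); last by move=> t _; rewrite hornerXn expr1n.
by rewrite sumr_const card_ord natrM.
Qed.

Lemma coef0_1subX_exp e : ((1 - 'X) ^+ e : {poly int})`_0 = 1.
Proof. by rewrite -horner_coef0 !hornerE expr1n. Qed.

Lemma coef1_1subX_exp e : ((1 - 'X) ^+ e : {poly int})`_1 = - e%:Z.
Proof.
elim: e => [|e IHe]; first by rewrite expr0 coef1.
by rewrite exprSr mulrBr mulr1 coefB coefMX /= IHe coef0_1subX_exp -opprD -addn1.
Qed.

Lemma polyser_geom_coef1 e i mu (H : nat -> nat) : (0 < i)%N ->
  polyser_eq ((1 - 'X) ^+ e) H (mu%:R *: \sum_(t < i) 'X^t) -> H 1%N = (mu * (e + (1 < i)))%N.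
Proof.
move=> i_gt0 eqH; have := eqH 0%N; have := eqH 1%N.
rewrite !coef_geom i_gt0 !big_ord_recl !big_ord0 /= !coef0_1subX_exp coef1_1subX_exp.
rewrite !mul1r !addr0 /= !subn0 => H1 [H0]; rewrite H0 in H1.
by case: (1 < i)%N H1 => H1; nia.
Qed.

Lemma hypersurface_hilbert1 n i d : (0 < i)%N ->
  hypersurface_hilbert n i d 1 = (n * (d + (1 < i)))%N.
Proof.
case: i => [//|[|i]] _; rewrite /hypersurface_hilbert /= bin1.
  by rewrite subnn bin0 addn0 PoszM add1n -addn1 PoszD addrK.
by rewrite subr0 PoszM add1n addn1.
Qed.

Section HomogeneousPolynomials.
Variables (k : fieldType) (d : nat).
Implicit Types (p q : mp k d).

Lemma homog_ofP t p : homog_of t p <-> p \is t.-homog.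
Proof.
split=> [p_t|p_t m /(dhomog_nemf_coeff p_t)//].
apply/dhomogP => m; rewrite mcoeff_msupp; apply: contraNeq => /p_t->; exact: eqxx.
Qed.

Lemma pihomogMl i t p q :
  p \is i.-homog -> pihomog mdeg (t + i)%N (p * q) = p * pihomog mdeg t q.
Proof.
move=> p_i; set K := maxn (mmeasure mdeg q) t.+1.
rewrite {1}(pihomog_partitionE (leq_maxl (mmeasure mdeg q) t.+1)) -/K mulr_sumr linear_sum /=.
have t_lt_K : (t < K)%N by rewrite leq_max ltnSn orbT.
rewrite (bigD1 (Ordinal t_lt_K)) //= big1 ?addr0 => [|s /eqP s_neq_t].
  by rewrite pihomog_dE // addnC dhomogM ?pihomogP.
apply: (pihomog_ne0 (d := (i + s)%N)); last by rewrite dhomogM ?pihomogP.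
by rewrite addnC eqn_add2r; apply/eqP => s_t; apply: s_neq_t; apply: val_inj.
Qed.

Lemma exists_pihomog_neq0 p : p != 0 -> exists t, pihomog mdeg t p != 0.
Proof.
move=> p_neq0; suff /existsP[t] : [exists t : 'I_(mmeasure mdeg p).+1, pihomog mdeg t p != 0].
  by exists t.
apply: contraNT p_neq0 => /existsPn all0.
apply/eqP; rewrite {1}(pihomog_partitionE (leqnSn (mmeasure mdeg p))).
by rewrite big1 // => t _; apply/eqP/negPn/all0.
Qed.

Lemma val_indhomog t (p : mp k d) : p \is t.-homog -> val (indhomog t p : dhomog d.+1 k t) = p.
Proof. by move=> p_t; rewrite /indhomog insubdK. Qed.

End HomogeneousPolynomials.

Section PresentationMatrix.
Variables (k : fieldType) (d n : nat) (phi : psmat k d n).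

Definition hvec t (y : 'I_n -> mp k d) : psvec k d n := fun c a => if a == t then y c else 0.

Lemma hvec_ps t y : (forall c, homog_of t (y c)) -> is_psvec (hvec t y).
Proof. by move=> y_t c a; rewrite /hvec; case: eqP => [->|_ m _] //; rewrite mcoeff0. Qed.

Definition hkernel i t (y : 'I_n -> mp k d) :=
  (forall c, homog_of t (y c)) /\ forall r, \sum_c phi r c i * y c = 0.

Definition hkernel_trivial i t := forall y, hkernel i t y -> forall c, y c = 0.

Lemma mat_apply0 r a : mat_apply phi (fun _ _ => 0) r a = 0.
Proof. by rewrite /mat_apply big1 // => c _; rewrite /ps_mul big1 // => b _; rewrite mulr0. Qed.

Section InitialDegree.
Variable i : nat.
Hypothesis phi_i : all_in_maxpow phi i.

Lemma mat_apply_vanish x t : (forall c s, (s < t)%N -> x c s = 0) ->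
  forall r a, (a < t + i)%N -> mat_apply phi x r a = 0.
Proof.
move=> x_t r a lt_a; rewrite /mat_apply big1 // => c _; rewrite /ps_mul big1 // => b _.
have [lt_bi|le_ib] := ltnP b i; first by rewrite phi_i ?mul0r.
by rewrite x_t ?mulr0 //; have := ltn_ord b; lia.
Qed.

Lemma mat_apply_initial x t : (forall c s, (s < t)%N -> x c s = 0) ->
  forall r, mat_apply phi x r (t + i)%N = \sum_c phi r c i * x c t.
Proof.
move=> x_t r; rewrite /mat_apply; apply: eq_bigr => c _; have i_lt : (i < (t + i).+1)%N by lia.
rewrite /ps_mul (bigD1 (Ordinal i_lt)) //= addnK big1 ?addr0 // => b /eqP b_neq_i.
have [lt_bi|le_ib] := ltnP b i; first by rewrite phi_i ?mul0r.
have lt_ib : (i < b)%N.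
  by rewrite ltn_neqAle le_ib andbT; apply/eqP => b_i; apply/b_neq_i/val_inj.
by rewrite x_t ?mulr0 //; have := ltn_ord b; lia.
Qed.

Lemma vanish_of_mat_apply_vanish x t : (forall s, (s < t)%N -> hkernel_trivial i s) -> is_psvec x ->
  (forall r a, (a < t + i)%N -> mat_apply phi x r a = 0) -> forall c s, (s < t)%N -> x c s = 0.
Proof.
move=> triv x_ps phix0.
suff x_s s : (s <= t)%N -> forall c s', (s' < s)%N -> x c s' = 0 by exact: x_s.
elim: s => [//|s IHs] lt_st c s'; rewrite ltnS leq_eqVlt => /orP[/eqP->|]; last first.
  by apply: IHs; apply: ltnW.
apply: (triv s lt_st (fun c => x c s)); split=> [c'|r]; first exact: x_ps.
by rewrite -mat_apply_initial ?phix0 ?ltn_add2r //; apply: IHs; apply: ltnW.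
Qed.

End InitialDegree.

(* n^t Q^n / n^(t+1) Q^n, as n-tuples of forms of degree t. *)
Definition gr_free t := {ffun 'I_n -> dhomog d.+1 k t}.

Lemma gr_free_sumE t m (cf : 'I_m -> k) (w : 'I_m -> gr_free t) c :
  val ((\sum_l cf l *: w l) c) = \sum_l cf l *: val (w l c).
Proof.
rewrite sum_ffunE (raddf_sum (@mpoly_of_dhomog d.+1 k t)); apply: eq_bigr => l _.
by rewrite ffunE.
Qed.

(* U is the space of degree-j initial forms of phi(Q^n) ∩ n^j Q^n, so that
   n^j M / n^(j+1) M is gr_free j / U. *)
Definition initial_space j (U : {vspace gr_free j}) :=
  forall u : gr_free j, u \in U <->
    exists2 x, is_psvec x & (forall r a, (a < j)%N -> mat_apply phi x r a = 0) /\
                           forall r, mat_apply phi x r j = val (u r).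

Lemma graded_length_initial_space j (U : {vspace gr_free j}) : initial_space U ->
  is_graded_length phi j (\dim {:gr_free j} - \dim U).
Proof.
move=> U_init; split=> [|m W W_good W_free].
  rewrite -dimv_compl; pose w := tnth (vbasis U^C%VS).
  exists (fun l => hvec j (fun c => val (w l c))); split=> [l|cf x x_ps phix]; first split.
  - by apply: hvec_ps => c; apply/homog_ofP; exact: dhomog_is_dhomog.
  - by move=> c a lt_aj; rewrite /hvec (ltn_eqF lt_aj).
  apply: (free_mod_compl (U := U)); apply/U_init; exists x => //; split=> [r a lt_aj|r].
    rewrite -phix ?(ltnW lt_aj) // big1 // => l _.
    by rewrite /hvec (ltn_eqF lt_aj) scaler0.
  by rewrite -phix // gr_free_sumE; apply: eq_bigr => l _; rewrite /hvec eqxx.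
pose w l : gr_free j := [ffun c => indhomog j (W l c j)].
apply: (free_mod_size (w := w)) => cf /U_init [x x_ps [phix0 phixj]].
apply: (W_free cf x x_ps) => c a; rewrite leq_eqVlt => /orP[/eqP->|lt_aj].
  rewrite phixj gr_free_sumE; apply: eq_bigr => l _.
  by rewrite ffunE val_indhomog //; apply/homog_ofP; exact: (W_good l).1.
by rewrite phix0 // big1 // => l _; rewrite (W_good l).2 ?scaler0.
Qed.

Lemma initial_space_low i j : all_in_maxpow phi i -> (j < i)%N ->
  initial_space (0%VS : {vspace gr_free j}).
Proof.
move=> phi_i lt_ji u; rewrite memv0; split=> [/eqP->|[x _ [_ phixj]]].
  exists (fun _ _ => 0) => [c a m _|]; first exact: mcoeff0.
  by split=> [r a _|r]; rewrite mat_apply0 // ffunE.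
apply/eqP/ffunP => r; apply: val_inj; rewrite ffunE -phixj.
exact: (mat_apply_vanish phi_i (t := 0)).
Qed.

(* The projection [pihomog] makes this linear without assuming phi_i homogeneous. *)
Definition initial_fun (i t : nat) : gr_free t -> gr_free (t + i)%N := fun y =>
  [ffun r => indhomog (t + i)%N (pihomog mdeg (t + i)%N (\sum_c phi r c i * val (y c)))].

#[global] Arguments initial_fun i t : clear implicits.
Lemma initial_fun_is_linear (i t : nat) : linear (initial_fun i t).
Proof.
move=> a y z; apply/ffunP => r; apply: val_inj; rewrite !ffunE /=.
rewrite !val_indhomog ?pihomogP // -linearP /=; congr pihomog.
rewrite scaler_sumr -big_split /=; apply: eq_bigr => c _.
by rewrite !ffunE /= mulrDr scalerAr.
Qed.

End PresentationMatrix.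

HB.instance Definition _ k d n (phi : psmat k d n) (i t : nat) :=
  GRing.isLinear.Build k (gr_free k d n t) (gr_free k d n (t + i)%N) _
    (initial_fun phi i t) (@initial_fun_is_linear k d n phi i t).

Definition initial_map k d n (phi : psmat k d n) (i t : nat) :
  'Hom(gr_free k d n t, gr_free k d n (t + i)%N) := linfun (initial_fun phi i t).

Section InitialMap.
Variables (k : fieldType) (d n : nat) (phi : psmat k d n).
Hypothesis phi_ps : is_psmat phi.

Lemma initial_mapE i t (y : gr_free k d n t) r :
  val (initial_map phi i t y r) = \sum_c phi r c i * val (y c).
Proof.
rewrite lfunE ffunE val_indhomog ?pihomogP // pihomog_dE // addnC.
by apply: rpred_sum => c _; apply: dhomogM; [apply/homog_ofP/phi_ps | exact: dhomog_is_dhomog].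
Qed.

Lemma initial_space_high i t : all_in_maxpow phi i ->
  (forall s, (s < t)%N -> hkernel_trivial phi i s) ->
  initial_space phi (limg (initial_map phi i t)).
Proof.
move=> phi_i triv u; split=> [/memv_imgP [y _ ->]|[x x_ps [phix0 phixt]]].
  pose x := hvec t (fun c => val (y c)).
  have x_t c s : (s < t)%N -> x c s = 0 by move=> lt_st; rewrite /x /hvec (ltn_eqF lt_st).
  exists x; first by apply: hvec_ps => c; apply/homog_ofP; exact: dhomog_is_dhomog.
  split=> [r a|r]; first exact: (mat_apply_vanish phi_i x_t).
  rewrite (mat_apply_initial phi_i x_t) initial_mapE.
  by apply: eq_bigr => c _; rewrite /x /hvec eqxx.
have x_t := vanish_of_mat_apply_vanish phi_i triv x_ps phix0.
apply/memv_imgP; exists [ffun c => indhomog t (x c t)]; first exact: memvf.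
apply/ffunP => r; apply: val_inj; rewrite initial_mapE -phixt (mat_apply_initial phi_i x_t).
by apply: eq_bigr => c _; rewrite ffunE val_indhomog //; apply/homog_ofP/x_ps.
Qed.

Lemma initial_map_kerP i t (v : gr_free k d n t) :
  v \in lker (initial_map phi i t) <-> hkernel phi i t (fun c => val (v c)).
Proof.
rewrite memv_ker; split=> [/eqP v0|[_ kerv]].
  split=> [c|r]; first by apply/homog_ofP; exact: dhomog_is_dhomog.
  by rewrite -initial_mapE v0 ffunE.
by apply/eqP/ffunP => r; apply: val_inj; rewrite initial_mapE kerv ffunE.
Qed.

Lemma dim_gr_free t : \dim {:gr_free k d n t} = (n * 'C(t + d, t))%N.
Proof. by rewrite dimvf /dim /= card_ord. Qed.

Lemma dim_initial_map_full i t : hkernel_trivial phi i t ->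
  \dim (limg (initial_map phi i t)) = \dim {:gr_free k d n t}.
Proof.
move=> triv; apply: limg_dim_eq; apply/eqP; rewrite capfv -subv0; apply/subvP => v.
move/initial_map_kerP/triv => v0; rewrite memv0; apply/eqP/ffunP => c.
by apply: val_inj; rewrite v0 ffunE.
Qed.

Lemma dim_initial_map_lt i t y c0 : hkernel phi i t y -> y c0 != 0 ->
  (\dim (limg (initial_map phi i t)) < \dim {:gr_free k d n t})%N.
Proof.
move=> [y_t kery] y_c0; pose v : gr_free k d n t := [ffun c => indhomog t (y c)].
have val_v c : val (v c) = y c by rewrite ffunE val_indhomog //; apply/homog_ofP.
have v_ker : v \in lker (initial_map phi i t).
  by apply/initial_map_kerP; split=> [c|r]; rewrite ?val_v //; under eq_bigr do rewrite val_v.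
have v_neq0 : v != 0 by apply: contraNneq y_c0 => v0; rewrite -val_v v0 ffunE.
rewrite -(limg_ker_dim (initial_map phi i t) fullv) capfv -add1n leq_add2r lt0n dimv_eq0.
by apply: contraNneq v_neq0 => ker0; rewrite -memv0 -ker0.
Qed.

Lemma dim_initial_map_gt0 i r c : phi r c i != 0 ->
  (0 < \dim (limg (initial_map phi i 0)))%N.
Proof.
move=> phi_rc; pose v : gr_free k d n 0 := [ffun c' => indhomog 0 (c' == c)%:R].
have val_v c' : val (v c') = (c' == c)%:R.
  by rewrite ffunE val_indhomog //; case: eqP => _; rewrite ?dhomog1 ?dhomog0.
rewrite lt0n dimv_eq0; apply: contraNneq phi_rc => img0.
have : initial_map phi i 0 v \in limg (initial_map phi i 0) by apply/memv_img/memvf.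
rewrite img0 memv0 => /eqP Pv0; have := initial_mapE i v r.
rewrite Pv0 ffunE (bigD1 c) //= val_v eqxx mulr1 big1 ?addr0 => [<- //|c' /negbTE c'_c].
by rewrite val_v c'_c mulr0.
Qed.

End InitialMap.

Section MinimalGenerators.
Variables (k : fieldType) (d n : nat) (phi : psmat k d n).

Lemma ps_mul_const f (p : mp k d) a :
  ps_mul f (fun b => if b == 0%N then p else 0) a = f a * p.
Proof.
rewrite /ps_mul big_ord_recr /= subnn eqxx big1 ?add0r // => b _.
by rewrite subn_eq0 leqNgt ltn_ord mulr0.
Qed.

Definition unit_psvec (l : 'I_n) : psvec k d n := hvec 0 (fun c => (c == l)%:R).

Lemma unit_psvec_ps l : is_psvec (unit_psvec l).
Proof. by apply: hvec_ps => c; apply/homog_ofP; case: (c == l); rewrite ?dhomog1 ?dhomog0. Qed.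

Lemma generates_unit_psvec : generates phi unit_psvec.
Proof.
move=> w w_ps; exists w, (fun _ _ => 0); do 2?split=> //; first by move=> c a m _; rewrite mcoeff0.
move=> c a; rewrite mat_apply0 addr0 (bigD1 c) //= big1 => [|l l_c].
  by rewrite ps_mul_const eqxx mulr1 addr0.
by rewrite ps_mul_const eq_sym (negbTE l_c) mulr0.
Qed.

Lemma is_mu_le mu : is_mu phi mu -> (mu <= n)%N.
Proof. by case=> _; apply; [exact: unit_psvec_ps | exact: generates_unit_psvec]. Qed.

Lemma is_mu_ge mu : minimal_pres phi -> is_mu phi mu -> (n <= mu)%N.
Proof.
(* Nakayama: phi has no constant terms, so the constant terms of generators span k^n. *)
move=> phi_min [[v [_ v_gen]] _].
pose V : 'M[k]_(mu, n) := \matrix_(l, c) (v l c 0%N)@_0.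
suff /mxrankS : (1%:M <= V)%MS by rewrite mxrank1 => /leq_trans; apply; exact: rank_leq_row.
apply/row_subP => c0; have [cf [x [_ [_ e_c0]]]] := v_gen _ (unit_psvec_ps c0).
apply/submxP; exists (\row_l (cf l 0%N)@_0); apply/rowP => c; rewrite !mxE.
have phix0 : mat_apply phi x c 0 = 0 by apply: (mat_apply_vanish phi_min (t := 0)).
have := congr1 (mcoeff 0%MM) (e_c0 c 0%N); rewrite phix0 addr0 /unit_psvec /hvec /= eq_sym.
rewrite rmorph_nat raddf_sum => ->; apply: eq_bigr => l _.
by rewrite /ps_mul big_ord1 !mxE; exact: (rmorphM (mcoeff 0%MM : mp k d -> k)).
Qed.

Lemma is_mu_eq mu : minimal_pres phi -> is_mu phi mu -> mu = n.
Proof. by move=> phi_min mu_phi; apply/eqP; rewrite eqn_leq is_mu_le ?is_mu_ge. Qed.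

End MinimalGenerators.

Section InitialDeterminant.
Variables (k : fieldType) (d n : nat) (phi : psmat k d n).

Lemma det_neq0_hkernel_trivial i t : \det (hcomp phi i) != 0 -> hkernel_trivial phi i t.
Proof.
move=> det_neq0 y [_ kery] c; pose Y : 'cV[mp k d]_n := \col_c y c.
have AY0 : hcomp phi i *m Y = 0.
  by apply/colP => r; rewrite !mxE -[RHS](kery r); apply: eq_bigr => c' _; rewrite !mxE.
have := congr1 (fun M => (\adj (hcomp phi i) *m M) c 0) AY0.
rewrite mulmxA mul_adj_mx mul_scalar_mx mulmx0 !mxE => /eqP.
by rewrite mulf_eq0 (negbTE det_neq0) => /eqP.
Qed.

Lemma det_eq0_hkernel i : is_psmat phi -> \det (hcomp phi i) = 0 ->
  exists t y c0, hkernel phi i t y /\ y c0 != 0.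
Proof.
move=> phi_ps det0; have /det0P [v v_neq0 kerv] : \det (hcomp phi i)^T == 0.
  by rewrite det_tr det0.
have /existsP [c0 v_c0] : [exists c, v 0 c != 0].
  by apply: contraNT v_neq0 => /existsPn v0; apply/eqP/rowP => c; rewrite mxE; apply/eqP/negPn.
(* phi_i is homogeneous, so homogeneous components of kernel vectors are kernel vectors. *)
have [t pi_c0] := exists_pihomog_neq0 v_c0.
exists t, (fun c => pihomog mdeg t (v 0 c)), c0; split=> //; split=> [c|r].
  by apply/homog_ofP; exact: pihomogP.
have := congr1 (fun M : 'rV_n => pihomog mdeg (t + i)%N (M 0 r)) kerv.
rewrite !mxE linear0 linear_sum /= => ker0; rewrite -[RHS]ker0; apply: eq_bigr => c _.
by rewrite !mxE [v 0 c * _]mulrC pihomogMl //; apply/homog_ofP/phi_ps.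
Qed.

Lemma is_iM_initial_neq0 i : is_iM phi i -> exists r c, phi r c i != 0.
Proof.
move=> [phi_i i_max]; have /existsP [r /existsP [c phi_rc]] : [exists r, exists c, phi r c i != 0].
  apply: contraT => /existsPn phi_i0; have := i_max i.+1; rewrite ltnn; apply=> r c a.
  rewrite ltnS leq_eqVlt => /orP[/eqP->|]; last exact: phi_i.
  by move/existsPn: (phi_i0 r) => /(_ c)/negPn/eqP.
by exists r, c.
Qed.

End InitialDeterminant.

Lemma graded_length_uniq k d n (phi : psmat k d n) j L1 L2 :
  is_graded_length phi j L1 -> is_graded_length phi j L2 -> L1 = L2.
Proof.
move=> [[w1 [good1 free1]] max1] [[w2 [good2 free2]] max2].
by apply/eqP; rewrite eqn_leq (max2 _ _ good1 free1) (max1 _ _ good2 free2).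
Qed.

Section HilbertFunction.
Variables (k : fieldType) (d n : nat) (phi : psmat k d n) (i : nat) (H : nat -> nat).
Hypotheses (phi_ps : is_psmat phi) (phi_i : all_in_maxpow phi i).
Hypothesis H_phi : is_hilbert_series phi H.

Lemma hilbert_initial_map t : (forall s, (s < t)%N -> hkernel_trivial phi i s) ->
  (H (t + i)%N)%:Z = (n * 'C(t + i + d, t + i))%N%:Z - (\dim (limg (initial_map phi i t)))%:Z.
Proof.
move=> triv; rewrite -(dim_gr_free k) subzn; last exact/dimvS/subvf.
congr Posz; apply: graded_length_uniq (H_phi _) (graded_length_initial_space _).
exact: initial_space_high.
Qed.

Lemma hilbert_eq_hypersurface j : (forall s, (s + i <= j)%N -> hkernel_trivial phi i s) ->
  (H j)%:Z = hypersurface_hilbert n i d j.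
Proof.
move=> triv; rewrite /hypersurface_hilbert; have [lt_ji|le_ij] := ltnP j i.
  have := graded_length_initial_space (initial_space_low phi_i lt_ji).
  by move/(graded_length_uniq (H_phi j)); rewrite dimv0 subn0 dim_gr_free subr0 => ->.
rewrite -(subnK le_ij) addnK hilbert_initial_map => [|s lt_s]; last by apply: triv; lia.
by rewrite dim_initial_map_full ?dim_gr_free ?PoszM ?mulrBr //; apply: triv; rewrite subnK.
Qed.

Lemma hilbert_gt_hypersurface t y c0 : (forall s, (s < t)%N -> hkernel_trivial phi i s) ->
  hkernel phi i t y -> y c0 != 0 -> hypersurface_hilbert n i d (t + i) < (H (t + i)%N)%:Z.
Proof.
move=> triv kery y_c0; rewrite hilbert_initial_map // /hypersurface_hilbert leq_addl addnK.
rewrite PoszM mulrBr ltrD2l ltrN2 -PoszM ltz_nat -(dim_gr_free k).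
exact: dim_initial_map_lt kery y_c0.
Qed.

Lemma hilbert_lt_free r c : phi r c i != 0 -> (H i < n * 'C(i + d, i))%N.
Proof.
move=> phi_rc.
have H_i : (H i)%:Z = (n * 'C(i + d, i))%N%:Z - (\dim (limg (initial_map phi i 0)))%:Z.
  exact: (hilbert_initial_map (t := 0)).
by rewrite -ltz_nat H_i gtrDl oppr_lt0 ltz_nat (dim_initial_map_gt0 phi_ps phi_rc).
Qed.

End HilbertFunction.

Section InitialDeterminantCriterion.
Variables (k : fieldType) (d n : nat) (phi : psmat k d n) (i : nat) (H : nat -> nat).
Hypotheses (n_gt0 : (0 < n)%N) (i_gt0 : (0 < i)%N).
Hypotheses (phi_ps : is_psmat phi) (phi_i : all_in_maxpow phi i).
Hypothesis H_phi : is_hilbert_series phi H.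

Lemma hnum_of_det_neq0 : \det (hcomp phi i) != 0 -> is_hnum H (n%:R *: \sum_(t < i) 'X^t).
Proof.
move=> det_neq0; exists d; split=> [j|]; last by rewrite horner_geom pnatr_eq0 -lt0n muln_gt0 n_gt0.
rewrite coef_geom -(conv_hypersurface_hilbert n i d) -/(conv _ (fun a => (H a)%:Z) j).
apply: eq_conv => a.
by apply: hilbert_eq_hypersurface => // s _; apply: det_neq0_hkernel_trivial.
Qed.

Lemma least_degree_hkernel_absurd e r c t y c0 : phi r c i != 0 ->
  polyser_eq ((1 - 'X) ^+ e) H (n%:R *: \sum_(s < i) 'X^s) ->
  (forall s, (s < t)%N -> hkernel_trivial phi i s) -> hkernel phi i t y -> y c0 != 0 -> False.
Proof.
move=> phi_rc eqH triv kery y_c0; have H1 := polyser_geom_coef1 i_gt0 eqH.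
have H_gt := hilbert_gt_hypersurface phi_ps phi_i H_phi triv kery y_c0.
have H_eq j : (j < t + i)%N -> (H j)%:Z = hypersurface_hilbert n i d j.
  by move=> lt_j; apply: hilbert_eq_hypersurface => // s le_s; apply: triv; lia.
have [lt1|le1] := ltnP 1 (t + i); last first.
  have [t0 i1] : t = 0%N /\ i = 1%N by lia.
  move: H_gt (hilbert_lt_free phi_ps phi_i H_phi phi_rc) H1; rewrite t0 i1 add0n.
  rewrite hypersurface_hilbert1 // ltz_nat bin1 add1n /= !addn0 => + + H1e.
  by rewrite H1e !ltn_pmul2l //; lia.
have e_d : e = d.
  move: (H_eq 1%N lt1); rewrite hypersurface_hilbert1 // H1 => /eqP.
  by rewrite eqz_nat eqn_pmul2l // eqn_add2r => /eqP.
have H_ti : (H (t + i)%N)%:Z = hypersurface_hilbert n i d (t + i).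
  apply: (conv_cancel (coef0_1subX_exp d) H_eq).
  by rewrite conv_hypersurface_hilbert -coef_geom -e_d; apply: eqH.
by move: H_gt; rewrite H_ti ltxx.
Qed.

Lemma det_neq0_of_hnum r c : phi r c i != 0 ->
  is_hnum H (n%:R *: \sum_(t < i) 'X^t) -> \det (hcomp phi i) != 0.
Proof.
move=> phi_rc [e [eqH _]].
suff triv t : hkernel_trivial phi i t.
  apply/eqP => /(det_eq0_hkernel phi_ps) [t [y [c0 [kery]]]].
  by rewrite (triv t y kery c0) eqxx.
elim/ltn_ind: t => t IHt y kery c0; apply/eqP/negPn/negP => y_c0.
exact: least_degree_hkernel_absurd phi_rc eqH IHt kery y_c0.
Qed.

End InitialDeterminantCriterion.

Theorem proposition4p10 (k : fieldType) (d n : nat) (phi : psmat k d n)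
    (iM mu : nat) (H : nat -> nat) :
  (0 < n)%N ->
  is_psmat phi ->
  ps_injective phi ->
  minimal_pres phi ->
  is_iM phi iM ->
  is_mu phi mu ->
  is_hilbert_series phi H ->
  (\det (hcomp phi iM) != 0 <->
   is_hnum H (mu%:R *: \sum_(t < iM) 'X^t)).
Proof.
move=> n_gt0 phi_ps _ phi_min iM_phi mu_phi H_phi.
have [phi_iM iM_max] := iM_phi.
have iM_gt0 : (0 < iM)%N := iM_max 1%N phi_min.
have [r [c phi_rc]] := is_iM_initial_neq0 iM_phi.
rewrite (is_mu_eq phi_min mu_phi).
by split; [exact: hnum_of_det_neq0 | exact: det_neq0_of_hnum phi_rc].
Qed.
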